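(* Under the assumptions of the multinomial lattice ($u>d>0$, $a_l=u^{L-l}d^{l-1}$, $a_L<1+R<a_1$, $a_l\neq 1+R$ for all $l$), let $X=(K-S_N)^+$ (European put) or $X=(S_N-K)^+$ (European call) with strike $K\ge0$ and maturity $N$, priced by $\pi_Q(0,X)=(1+R)^{-N}E^{Q^N}[X]$. Then for every strike $K$ and every risk-neutral $Q\in\mathcal{D}(\{a_1,\ldots,a_L\},1+R)$, $\pi_{Q_L}(0,X)\le\pi_Q(0,X)\le\pi_{Q_U}(0,X)$, where $Q_L=Q_{l^*,l^*+1}$ with $l^*$ the largest index such that $a_{l^*}>1+R$, and $Q_U=Q_{1,L}$.
   Context: Under $Q^N$, $S_N=S_0\prod_{i=1}^NZ_i$ with $Z_i$ i.i.d. with law $Q=(q_1,\ldots,q_L)$ on $\{a_1,\ldots,a_L\}$. $\mathcal{D}(\mathcal{A},m)$ is the set of probability mass functions on the finite set $\mathcal{A}$ with mean $m$. For $l_1<l_2$ with $a_{l_2}<1+R<a_{l_1}$, $Q_{l_1,l_2}$ is the probability vector with $q_{l_1}=\frac{(1+R)-a_{l_2}}{a_{l_1}-a_{l_2}}$, $q_{l_2}=1-q_{l_1}$, $q_l=0$ otherwise. *)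

From HB Require Import structures.
From mathcomp Require Import all_boot all_order all_algebra.
Set Implicit Arguments. Unset Strict Implicit. Unset Printing Implicit Defensive.
Import Order.TTheory GRing.Theory Num.Theory.
Local Open Scope ring_scope.

Definition lat_a {R : realFieldType} (u d : R) (L l : nat) : R :=
  u ^+ (L - l) * d ^+ (l - 1).

(* Q in D({a_1,...,a_L}, 1+r): a pmf q_1..q_L on the (distinct) values a_l with mean 1+r *)
Definition risk_neutral {R : realFieldType} (u d r : R) (L : nat) (q : nat -> R) : Prop :=
  (forall l, (1 <= l <= L)%N -> 0 <= q l) /\
  \sum_(1 <= l < L.+1) q l = 1 /\
  \sum_(1 <= l < L.+1) q l * lat_a u d L l = 1 + r.

Definition Qpair {R : realFieldType} (u d r : R) (L l1 l2 : nat) (l : nat) : R :=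
  let p := ((1 + r) - lat_a u d L l2) / (lat_a u d L l1 - lat_a u d L l2) in
  if l == l1 then p else if l == l2 then 1 - p else 0.

Definition lstar {R : realFieldType} (u d r : R) (L : nat) : nat :=
  \max_(l < L.+1 | (1 <= l)%N && (1 + r < lat_a u d L l)) l.

(* E^{Q^N}[f(S_N)], S_N = S0 * prod_{i=1}^N Z_i, Z_i iid with P(Z_i = a_l) = q_l.
   A path is w : 'I_N -> 'I_L, step k takes value a_{w k + 1}. *)
Definition expect_QN {R : realFieldType} (u d : R) (L N : nat) (q : nat -> R)
  (S0 : R) (f : R -> R) : R :=
  \sum_(w : {ffun 'I_N -> 'I_L})
     (\prod_(k < N) q (w k).+1) *
     f (S0 * \prod_(k < N) lat_a u d L (w k).+1).

Definition price {R : realFieldType} (u d r : R) (L N : nat) (q : nat -> R)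
  (S0 : R) (f : R -> R) : R :=
  ((1 + r) ^+ N)^-1 * expect_QN u d L N q S0 f.

Definition put_payoff {R : realFieldType} (K : R) (s : R) : R := Num.max (K - s) 0.
Definition call_payoff {R : realFieldType} (K : R) (s : R) : R := Num.max (s - K) 0.

From HB Require Import structures.
From mathcomp Require Import all_boot all_order all_algebra.
From mathcomp Require Import ring lra zify.
Set Implicit Arguments. Unset Strict Implicit. Unset Printing Implicit Defensive.
Import Order.TTheory GRing.Theory Num.Theory.
Local Open Scope ring_scope.

(* The argument is a convex-order comparison of step distributions:
   - both payoffs are convex, and for convex g the map
     s |-> E^{Q^n}[g(s Z_1 ... Z_n)] is again convex (nonnegative combination
     of convex functions of s composed with positive scalings);
   - conditioning on the first step gives the recursion
     E^{Q^{n+1}}[g(s . )] = E_Q[ E^{Q^n}[g(s Z . )] ], so if E_Q[h(Z)] <= E_Q'[h(Z)]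
     for every convex h, then E^{Q^n}[g(s . )] <= E^{Q'^n}[g(s . )] by induction;
   - among the laws on {a_1 > ... > a_L} with mean 1+r, the two-point law on the
     extreme values a_1, a_L dominates every Q in convex order (a convex h lies
     below its chord on [a_L, a_1]), while the two-point law on the neighbours
     a_{l*} > 1+r > a_{l*+1} is dominated by every Q (no a_l lies strictly
     between them, and a convex h lies above its chord outside [a_{l*+1}, a_{l*}]). *)

Section Convexity.
Variable R : realFieldType.

Definition convex3 (g : R -> R) : Prop :=
  forall x y z, x < y -> y < z -> (z - x) * g y <= (z - y) * g x + (y - x) * g z.

Lemma convex3_scale_r (g : R -> R) (c : R) :
  convex3 g -> 0 < c -> convex3 (fun x => g (x * c)).
Proof.
move=> hg hc x y z hxy hyz /=.
have := hg (x * c) (y * c) (z * c); rewrite !ltr_pM2r // => /(_ hxy hyz).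
have -> : z * c - x * c = c * (z - x) by ring.
have -> : z * c - y * c = c * (z - y) by ring.
have -> : y * c - x * c = c * (y - x) by ring.
by rewrite -!mulrA -mulrDr ler_pM2l.
Qed.

Lemma convex3_scale_l (g : R -> R) (c : R) :
  convex3 g -> 0 < c -> convex3 (fun x => g (c * x)).
Proof.
move=> hg hc x y z hxy hyz.
by have := convex3_scale_r hg hc hxy hyz; rewrite /= (mulrC x) (mulrC y) (mulrC z).
Qed.

Lemma convex3_sum (I : finType) (c : I -> R) (G : I -> R -> R) :
  (forall i, 0 <= c i) -> (forall i, convex3 (G i)) ->
  convex3 (fun s => \sum_i c i * G i s).
Proof.
move=> hc hG x y z hxy hyz.
rewrite !mulr_sumr -big_split /=; apply: ler_sum => i _.
rewrite mulrCA (mulrCA (z - y)) (mulrCA (y - x)) -mulrDr.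
by apply: ler_wpM2l => //; apply: hG.
Qed.

Lemma convex3_max_affine (al be : R) : convex3 (fun s => Num.max (al * s + be) 0).
Proof.
move=> x y z hxy hyz /=.
have hzy : 0 <= z - y by lra.
have hyx : 0 <= y - x by lra.
case: (leP (al * y + be) 0) => hy.
  by rewrite mulr0 addr_ge0 // mulr_ge0 // le_max lexx orbT.
have -> : (z - x) * (al * y + be) =
          (z - y) * (al * x + be) + (y - x) * (al * z + be) by ring.
by rewrite lerD // ler_wpM2l // le_max lexx.
Qed.

Lemma convex3_payoff (is_call : bool) (K : R) :
  convex3 (if is_call then call_payoff K else put_payoff K).
Proof.
case: is_call => x y z hxy hyz.
  by have := convex3_max_affine 1 (- K) hxy hyz; rewrite /call_payoff !mul1r.
have := convex3_max_affine (-1) K hxy hyz.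
by rewrite /put_payoff !mulN1r ![K + - _]addrC.
Qed.

Lemma convex3_below_chord (h : R -> R) (b c x : R) :
  convex3 h -> b < c -> b <= x -> x <= c ->
  (c - b) * h x <= (c - x) * h b + (x - b) * h c.
Proof.
move=> hh hbc; rewrite le_eqVlt => /predU1P[<- _|hbx].
  by rewrite subrr mul0r addr0.
rewrite le_eqVlt => /predU1P[->|hxc]; first by rewrite subrr mul0r add0r.
exact: hh.
Qed.

Lemma convex3_above_chord (h : R -> R) (b c x : R) :
  convex3 h -> b < c -> x <= b \/ c <= x ->
  (c - x) * h b + (x - b) * h c <= (c - b) * h x.
Proof.
move=> hh hbc [|]; rewrite le_eqVlt => /predU1P[->|hx].
- by rewrite subrr mul0r addr0.
- by have := hh x b c hx hbc; lra.
- by rewrite subrr mul0r add0r.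
- by have := hh b c x hbc hx; lra.
Qed.

End Convexity.

Section OneStep.
Variable R : realFieldType.

Definition step_mean (L : nat) (q F : nat -> R) : R := \sum_(j < L) q j.+1 * F j.+1.

(* Averaging a chord: the chord is affine, so its mean is its value at the mean. *)
Lemma step_mean_chord L (q x : nat -> R) (A B b c m : R) :
  \sum_(j < L) q j.+1 = 1 -> step_mean L q x = m ->
  step_mean L q (fun l => (c - x l) * A + (x l - b) * B) = (c - m) * A + (m - b) * B.
Proof.
move=> hs1 <-; rewrite /step_mean.
have E (j : 'I_L) : q j.+1 * ((c - x j.+1) * A + (x j.+1 - b) * B) =
           q j.+1 * (c * A - b * B) + q j.+1 * x j.+1 * (B - A) by ring.
rewrite (eq_bigr _ (fun j _ => E j)) big_split /= -!mulr_suml hs1; ring.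
Qed.

(* The two-point law with mean m on b < c, weight p = (m-b)/(c-b) on c. *)
Lemma two_point_chord (A B b c m : R) : b < c ->
  (c - b) * ((m - b) / (c - b) * B + (1 - (m - b) / (c - b)) * A) =
  (c - m) * A + (m - b) * B.
Proof. by move=> hbc; field; rewrite subr_eq0 gt_eqF. Qed.

Lemma two_point_weight (b m c : R) : b < m -> m < c -> 0 <= (m - b) / (c - b) <= 1.
Proof. by move=> hbm hmc; rewrite divr_ge0 ?ler_pdivrMr /=; lra. Qed.

Lemma step_mean_le_two_point L (q x : nat -> R) (h : R -> R) (b c m : R) :
  b < c -> (forall l, (1 <= l <= L)%N -> 0 <= q l) ->
  \sum_(j < L) q j.+1 = 1 -> step_mean L q x = m ->
  (forall l, (1 <= l <= L)%N -> (c - b) * h (x l) <= (c - x l) * h b + (x l - b) * h c) ->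
  step_mean L q (h \o x) <= (m - b) / (c - b) * h c + (1 - (m - b) / (c - b)) * h b.
Proof.
move=> hbc hq hs1 hm hpt; have hcb : 0 < c - b by rewrite subr_gt0.
rewrite -(ler_pM2l hcb).
rewrite two_point_chord // -(step_mean_chord (h b) (h c) b c hs1 hm) /step_mean mulr_sumr.
apply: ler_sum => j _; rewrite mulrCA.
by apply: ler_wpM2l; [apply: hq | apply: hpt]; rewrite /= ltn_ord.
Qed.

Lemma two_point_le_step_mean L (q x : nat -> R) (h : R -> R) (b c m : R) :
  b < c -> (forall l, (1 <= l <= L)%N -> 0 <= q l) ->
  \sum_(j < L) q j.+1 = 1 -> step_mean L q x = m ->
  (forall l, (1 <= l <= L)%N -> (c - x l) * h b + (x l - b) * h c <= (c - b) * h (x l)) ->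
  (m - b) / (c - b) * h c + (1 - (m - b) / (c - b)) * h b <= step_mean L q (h \o x).
Proof.
move=> hbc hq hs1 hm hpt; have hcb : 0 < c - b by rewrite subr_gt0.
rewrite -(ler_pM2l hcb).
rewrite two_point_chord // -(step_mean_chord (h b) (h c) b c hs1 hm) /step_mean mulr_sumr.
apply: ler_sum => j _; rewrite mulrCA.
by apply: ler_wpM2l; [apply: hq | apply: hpt]; rewrite /= ltn_ord.
Qed.

Lemma step_mean_point L (l : nat) (c : R) (F : nat -> R) : (1 <= l <= L)%N ->
  step_mean L (fun k => if k == l then c else 0) F = c * F l.
Proof.
move=> /andP[hl1 hlL]; have hl : (l.-1 < L)%N by lia.
rewrite /step_mean (bigD1 (Ordinal hl)) //= prednK // eqxx big1 ?addr0 // => j hj.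
case: eqP => [E|]; last by rewrite mul0r.
by case/eqP: hj; apply: val_inj => /=; lia.
Qed.

End OneStep.

Section Lattice.
Variables (R : realFieldType) (u d r : R) (L : nat).
Hypotheses (hd : 0 < d) (hdu : d < u).

Lemma lat_a_gt0 l : 0 < lat_a u d L l.
Proof. by rewrite /lat_a mulr_gt0 // exprn_gt0 // (lt_trans hd). Qed.

Lemma lat_a_antitone l l' : (1 <= l)%N -> (l <= l')%N -> (l' <= L)%N ->
  lat_a u d L l' <= lat_a u d L l.
Proof.
move=> hl1 hll' hl'L; rewrite /lat_a.
have -> : (L - l = (L - l') + (l' - l))%N by lia.
have -> : (l' - 1 = (l - 1) + (l' - l))%N by lia.
have hu : 0 < u by exact: lt_trans hdu.
rewrite !exprD -mulrA [_ ^+ (l' - l) * _]mulrC.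
apply: ler_wpM2l; first by rewrite exprn_ge0 // ltW.
apply: ler_wpM2l; first by rewrite exprn_ge0 // ltW.
by apply: lerXn2r; rewrite ?nnegrE ltW.
Qed.

Lemma step_mean_Qpair l1 l2 (F : nat -> R) :
  (1 <= l1 <= L)%N -> (1 <= l2 <= L)%N -> l1 != l2 ->
  let p := ((1 + r) - lat_a u d L l2) / (lat_a u d L l1 - lat_a u d L l2) in
  step_mean L (Qpair u d r L l1 l2) F = p * F l1 + (1 - p) * F l2.
Proof.
move=> hl1 hl2 hne p.
rewrite -(step_mean_point p F hl1) -(step_mean_point (1 - p) F hl2) /step_mean.
rewrite -big_split /=; apply: eq_bigr => j _; rewrite -mulrDl /Qpair -/p.
case: eqP => [E|]; last by rewrite add0r.
by move: hne; rewrite -E => /negbTE ->; rewrite addr0.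
Qed.

Lemma Qpair_nonneg l1 l2 :
  0 <= ((1 + r) - lat_a u d L l2) / (lat_a u d L l1 - lat_a u d L l2) <= 1 ->
  forall l, (1 <= l <= L)%N -> 0 <= Qpair u d r L l1 l2 l.
Proof.
by move=> /andP[hp0 hp1] l _; rewrite /Qpair; case: ifP => // _; case: ifP; rewrite ?subr_ge0.
Qed.

Hypotheses (hL : lat_a u d L L < 1 + r) (h1 : 1 + r < lat_a u d L 1).
Hypothesis hne : forall l, (1 <= l <= L)%N -> lat_a u d L l != 1 + r.

Lemma lstar_spec :
  [/\ (1 <= lstar u d r L)%N, (lstar u d r L < L)%N,
      1 + r < lat_a u d L (lstar u d r L) & lat_a u d L (lstar u d r L).+1 < 1 + r].
Proof.
pose P := [pred i : 'I_L.+1 | (1 <= i)%N && (1 + r < lat_a u d L i)].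
have h1L : (1 < L.+1)%N.
  rewrite ltnS lt0n; apply/eqP => L0; move: hL h1; rewrite L0 /lat_a /=; lra.
have [i Pi Ei] : {i | P i & lstar u d r L = i}.
  apply: eq_bigmax_cond; apply/card_gt0P; exists (Ordinal h1L).
  by rewrite unfold_in /= h1.
rewrite Ei; move: Pi => /andP[hi1 hi].
have hiL : (i < L)%N.
  rewrite ltn_neqAle -ltnS ltn_ord andbT; apply/eqP => E.
  by move: hi; rewrite E => /(lt_trans hL); rewrite ltxx.
have hiS : (i.+1 < L.+1)%N by [].
split=> //; rewrite lt_neqAle hne ?hiL //= leNgt; apply/negP => hlt.
have := @leq_bigmax_cond _ P (fun i : 'I_L.+1 => nat_of_ord i) (Ordinal hiS).
by rewrite /P /= hlt => /(_ isT); rewrite -/(lstar u d r L) Ei ltnn.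
Qed.

Lemma risk_neutralP (q : nat -> R) : risk_neutral u d r L q ->
  [/\ forall l, (1 <= l <= L)%N -> 0 <= q l, \sum_(j < L) q j.+1 = 1
    & step_mean L q (lat_a u d L) = 1 + r].
Proof. by case=> hq0 []; rewrite !big_add1 !big_mkord. Qed.

Section Bounds.
Variable q : nat -> R.
Hypothesis hq : risk_neutral u d r L q.
Variable h : R -> R.
Hypothesis hh : convex3 h.

Lemma step_mean_le_Qupper :
  step_mean L q (h \o lat_a u d L) <= step_mean L (Qpair u d r L 1 L) (h \o lat_a u d L).
Proof.
have [hq0 hs1 hm] := risk_neutralP hq.
have hL1 : (1 < L)%N by have [] := lstar_spec; lia.
have hab : lat_a u d L L < lat_a u d L 1 by exact: lt_trans h1.
rewrite step_mean_Qpair ?(ltnW hL1) ?leqnn ?neq_ltn ?hL1 //.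
apply: step_mean_le_two_point => // l /andP[hl1 hlL].
by apply: convex3_below_chord; rewrite ?lat_a_antitone.
Qed.

Lemma step_mean_Qlower_le :
  step_mean L (Qpair u d r L (lstar u d r L) (lstar u d r L).+1) (h \o lat_a u d L)
  <= step_mean L q (h \o lat_a u d L).
Proof.
have [hq0 hs1 hm] := risk_neutralP hq.
have [hs1L hsL hsa hsa1] := lstar_spec.
rewrite step_mean_Qpair ?hs1L ?hsL ?(ltnW hsL) ?neq_ltn ?ltnSn //.
apply: two_point_le_step_mean => //; first exact: lt_trans hsa.
move=> l /andP[hl1 hlL]; apply: convex3_above_chord => //; first exact: lt_trans hsa.
case: (leqP l (lstar u d r L)) => hl.
  by right; apply: lat_a_antitone => //; exact: ltnW.
by left; apply: lat_a_antitone.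
Qed.

End Bounds.

Section Expectation.

Lemma expect_QN_S (n : nat) (q : nat -> R) (s : R) (g : R -> R) :
  expect_QN u d L n.+1 q s g =
  step_mean L q (fun l => expect_QN u d L n q (s * lat_a u d L l) g).
Proof.
rewrite /expect_QN /step_mean; symmetry.
under eq_bigr do rewrite mulr_sumr.
rewrite pair_big /=; symmetry.
pose cons (p : 'I_L * {ffun 'I_n -> 'I_L}) : {ffun 'I_n.+1 -> 'I_L} :=
  [ffun k => oapp p.2 p.1 (unlift ord0 k)].
pose uncons (w : {ffun 'I_n.+1 -> 'I_L}) : 'I_L * {ffun 'I_n -> 'I_L} :=
  (w ord0, [ffun k => w (lift ord0 k)]).
have consK : cancel cons uncons.
  move=> [j w]; rewrite /cons /uncons /= ffunE unlift_none /=; congr pair.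
  by apply/ffunP => k; rewrite !ffunE liftK.
have unconsK : cancel uncons cons.
  move=> w; apply/ffunP => k; rewrite /cons /uncons ffunE.
  by case: unliftP => [k' ->|->] /=; rewrite ?ffunE.
rewrite (reindex cons) /=; last by exists uncons => x _; [apply: consK | apply: unconsK].
apply: eq_bigr => -[j w] _ /=.
rewrite !big_ord_recl /cons !ffunE unlift_none /=.
under eq_bigr do rewrite ffunE liftK /=.
under [X in _ * g (_ * (_ * X))]eq_bigr do rewrite ffunE liftK /=.
by rewrite !mulrA.
Qed.

Variable g : R -> R.
Hypothesis hg : convex3 g.

Lemma convex3_expect_QN (n : nat) (q : nat -> R) :
  (forall l, (1 <= l <= L)%N -> 0 <= q l) ->
  convex3 (fun s => expect_QN u d L n q s g).
Proof.
move=> hq; apply: convex3_sum => w.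
  by apply: prodr_ge0 => k _; apply: hq; rewrite /= ltn_ord.
by apply: convex3_scale_r => //; apply: prodr_gt0 => k _; exact: lat_a_gt0.
Qed.

Lemma expect_QN_le (n : nat) (q q' : nat -> R) :
  (forall l, (1 <= l <= L)%N -> 0 <= q l) ->
  (forall l, (1 <= l <= L)%N -> 0 <= q' l) ->
  (forall h, convex3 h ->
     step_mean L q (h \o lat_a u d L) <= step_mean L q' (h \o lat_a u d L)) ->
  forall s, 0 < s -> expect_QN u d L n q s g <= expect_QN u d L n q' s g.
Proof.
move=> hq hq' hdom; elim: n => [|n IH] s hs.
  by apply: ler_sum => w _; rewrite !big_ord0.
rewrite !expect_QN_S.
apply: le_trans (hdom (fun z => expect_QN u d L n q' (s * z) g) _).
  apply: ler_sum => j _; rewrite ler_wpM2l ?hq ?ltn_ord //.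
  by apply: IH; rewrite mulr_gt0 ?lat_a_gt0.
have hE : convex3 (fun t => expect_QN u d L n q' t g) by exact: convex3_expect_QN.
exact: convex3_scale_l hE hs.
Qed.

End Expectation.
End Lattice.

Theorem mainTheorem6 (R : realFieldType) (u d r S0 : R) (L N : nat)
  (hd : 0 < d) (hdu : d < u) (hS0 : 0 < S0)
  (hL : lat_a u d L L < 1 + r) (h1 : 1 + r < lat_a u d L 1)
  (hne : forall l, (1 <= l <= L)%N -> lat_a u d L l != 1 + r) :
  forall (is_call : bool) (K : R), 0 <= K ->
  let f := if is_call then call_payoff K else put_payoff K in
  forall q : nat -> R, risk_neutral u d r L q ->
    price u d r L N (Qpair u d r L (lstar u d r L) (lstar u d r L).+1) S0 f
      <= price u d r L N q S0 f
    /\ price u d r L N q S0 f <= price u d r L N (Qpair u d r L 1 L) S0 f.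
Proof.
move=> is_call K _ f q hq.
have hf : convex3 f := convex3_payoff is_call K.
have [_ _ hsa hsa1] := lstar_spec hL h1 hne.
have qL_nonneg := Qpair_nonneg (two_point_weight hsa1 hsa).
have qU_nonneg := Qpair_nonneg (two_point_weight hL h1).
have hr : 0 < 1 + r := lt_trans (lat_a_gt0 L hd hdu L) hL.
have hdisc : 0 <= ((1 + r) ^+ N)^-1 by rewrite invr_ge0 exprn_ge0 // ltW.
have [hq0 _ _] := risk_neutralP hq.
split; rewrite /price ler_wpM2l //; apply: expect_QN_le => // h hh.
- exact: step_mean_Qlower_le.
- exact: step_mean_le_Qupper.
Qed.
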